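(* Consider the Probabilistic Serial mechanism with $n$ agents and $m \le n$ items. Agent 1 has a strict linear order $\succ_1$ over the items; let $\overline{O}$ be the set of its $k$ most preferred items under $\succ_1$ ($1 \le k \le m$). Fix arbitrary reported strict linear orders of agents $2,\dots,n$, and consider the truthful run in which agent 1 reports $\succ_1$. Let $T$ be the time at which the last item of $\overline{O}$ is exhausted in this run, and suppose $\tfrac12 \le T < \tfrac23$. Suppose there is an item $o^* \in \overline{O}$ of which agent 1 receives a positive amount such that, at the moment $o^*$ is exhausted, the agents eating $o^*$ are exactly agent 1 and one other agent, called agent 2. Let $t_1$ be the time at which agent 1 starts eating $o^*$ and $t_1+t_2$ the time at which $o^*$ is exhausted, and let $O_3$ be the set of items exhausted during the time interval $(t_1+t_2, T]$ in the truthful run. Then for every item in $O_3$, at the moment it is exhausted in the truthful run, there are at least two agents other than agents 1 and 2 eating it.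
   Context: Probabilistic Serial: there are $n$ agents and $m$ divisible items of unit supply; each agent reports a strict linear order over all items. Starting at time $0$, every agent consumes at rate $1$ per unit time its most preferred item (according to its report) among those with positive remaining supply; when an item is exhausted, agents consuming it move to their most preferred item still available; this continues until all items are exhausted. *)

From HB Require Import structures.
From mathcomp Require Import all_boot all_order all_algebra all_fingroup.
Set Implicit Arguments. Unset Strict Implicit. Unset Printing Implicit Defensive.
Import Order.TTheory GRing.Theory Num.Theory.
Local Open Scope ring_scope.

(* A strict linear order over items is given by a ranking
   permutation [rk : {perm 'I_m}]: item j is the (rk j)-th most preferred
   (rank 0 = best), so j' is preferred to j iff rk j' < rk j.

   A run of the eating process is described by its exhaustion times
   [e : 'I_m -> R] (e j = time at which item j is exhausted).  At time t,
   agent i eats its most preferred item among those not yet exhausted,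
   i.e. among {j | t < e j}.  Hence agent i eats item j exactly during the
   time interval [start e (rk_i) j, e j) (empty if start >= e j), where
   start is the latest exhaustion time of items i strictly prefers to j
   (or 0). *)

Section PS.
Variables (R : realFieldType) (n m : nat).

Definition start (e : 'I_m -> R) (rk : {perm 'I_m}) (j : 'I_m) : R :=
  \big[Num.max/0]_(j' | (rk j' < rk j)%N) e j'.

Definition amount (e : 'I_m -> R) (rk : {perm 'I_m}) (j : 'I_m) : R :=
  Num.max 0 (e j - start e rk j).

(* e is the vector of exhaustion times of the PS run under profile pref:
   every item (of unit supply) is consumed exactly when it is exhausted *)
Definition PS_run (pref : 'I_n -> {perm 'I_m}) (e : 'I_m -> R) : Prop :=
  forall j : 'I_m, \sum_(i < n) amount e (pref i) j = 1.

Definition eating_at_exhaustion (pref : 'I_n -> {perm 'I_m}) (e : 'I_m -> R)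
    (i : 'I_n) (j : 'I_m) : bool :=
  start e (pref i) j < e j.

End PS.

From HB Require Import structures.
From mathcomp Require Import all_boot all_order all_algebra all_fingroup.
From mathcomp Require Import lra.
Set Implicit Arguments. Unset Strict Implicit. Unset Printing Implicit Defensive.
Import Order.TTheory GRing.Theory Num.Theory.
Local Open Scope ring_scope.

(* Only agents 1 and 2 eat o* when it runs out, and neither eats it for
   longer than its exhaustion time t*, so 1 <= 2 t*, i.e. t* >= 1/2.  An
   item j exhausted at a later time t_j can be started by agents 1 and 2
   only once o* is gone, so each of them gets at most t_j - t* of it, and
   every other agent gets at most t_j.  With at most one other agent
   eating j, its unit supply is covered by at most 3 t_j - 2 t* <= 3 T - 1
   < 1, a contradiction. *)

Section Eating.
Variables (R : realFieldType) (m : nat) (e : 'I_m -> R) (rk : {perm 'I_m}).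

Lemma start_ge0 (j : 'I_m) : 0 <= start e rk j.
Proof. exact: bigmax_ge_id. Qed.

Lemma le_start {j j' : 'I_m} : (rk j' < rk j)%N -> e j' <= start e rk j.
Proof. exact: le_bigmax_cond. Qed.

Lemma amount_eq0 (j : 'I_m) : ~~ (start e rk j < e j) -> amount e rk j = 0.
Proof. by rewrite -leNgt => le_e_start; apply/max_idPl; rewrite subr_le0. Qed.

Lemma amount_le (j : 'I_m) (s : R) :
  s <= start e rk j -> s <= e j -> amount e rk j <= e j - s.
Proof.
by move=> le_s_start le_s_e; rewrite ge_max subr_ge0 le_s_e lerD2l lerN2.
Qed.

(* The agent ranks [o] above [j], since otherwise [j] would run out first. *)
Lemma exhaustion_le_start (o j : 'I_m) :
  start e rk o < e o -> e o < e j -> e o <= start e rk j.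
Proof.
move=> eat_o lt_oj; case: (ltngtP (rk o) (rk j)) => [|lt_jo|/val_inj/perm_inj eq_oj].
- exact: le_start.
- by have := lt_trans (le_lt_trans (le_start lt_jo) eat_o) lt_oj; rewrite ltxx.
- by rewrite eq_oj ltxx in lt_oj.
Qed.

End Eating.

Section Run.
Variables (R : realFieldType) (n m : nat) (pref : 'I_n -> {perm 'I_m}) (e : 'I_m -> R).
Hypothesis PS : PS_run pref e.

Lemma PS_run_sum_amount (A : {set 'I_n}) (j : 'I_m) :
  (forall i, eating_at_exhaustion pref e i j -> i \in A) ->
  \sum_(i in A) amount e (pref i) j = 1.
Proof.
move=> eatersA; rewrite -(PS j) [RHS](bigID (mem A)) /= [X in _ + X]big1 ?addr0 // => i.
by move=> notA; apply/amount_eq0/(contra (eatersA i)).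
Qed.

Lemma PS_run_exhaustion_gt0 (j : 'I_m) : 0 < e j.
Proof.
rewrite ltNge; apply/negP => le_ej0; have := PS j.
rewrite big1 => [/eqP|i _]; first by rewrite eq_sym oner_eq0.
by apply: amount_eq0; rewrite -leNgt (le_trans le_ej0 (start_ge0 _ _ _)).
Qed.

Lemma PS_run_amount_le (i : 'I_n) (j : 'I_m) : amount e (pref i) j <= e j.
Proof.
rewrite -[leRHS]subr0.
by apply: amount_le; [apply: start_ge0 | apply/ltW/PS_run_exhaustion_gt0].
Qed.

Lemma PS_run_supply_le (A : {set 'I_n}) (j : 'I_m) :
  (forall i, eating_at_exhaustion pref e i j -> i \in A) -> 1 <= e j *+ #|A|.
Proof.
move=> eatersA; rewrite -(PS_run_sum_amount eatersA) -sumr_const.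
by apply: ler_sum => i _; apply: PS_run_amount_le.
Qed.

(* The agents of [B] were eating [o] when it ran out, so they start on [j]
   only after time [e o]. *)
Lemma PS_run_late_supply_le (A B : {set 'I_n}) (o j : 'I_m) :
  [disjoint A & B] ->
  (forall i, eating_at_exhaustion pref e i j -> i \in A :|: B) ->
  (forall i, i \in B -> eating_at_exhaustion pref e i o) -> e o < e j ->
  1 <= e j *+ #|A| + (e j - e o) *+ #|B|.
Proof.
move=> disjAB eatersAB eatersB lt_oj.
rewrite -(PS_run_sum_amount eatersAB) -!sumr_const.
rewrite (eq_bigl [predU A & B]) => [|i]; last by rewrite !inE.
rewrite bigU //; apply: lerD; apply: ler_sum => i iB.
- exact: PS_run_amount_le.
- apply: amount_le; last exact: ltW.
  exact: exhaustion_le_start (eatersB i iB) lt_oj.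
Qed.

End Run.

Theorem lemma4 (R : realFieldType) (n m k : nat)
    (pref : 'I_n -> {perm 'I_m}) (a1 a2 : 'I_n) (e : 'I_m -> R) (ostar : 'I_m) :
  (m <= n)%N -> (0 < k)%N -> (k <= m)%N -> a1 != a2 ->
  PS_run pref e ->
  let Obar := [set j : 'I_m | (pref a1 j < k)%N] in
  let T := \big[Num.max/0]_(j in Obar) e j in
  1 / 2 <= T -> T < 2 / 3 ->
  ostar \in Obar ->
  0 < amount e (pref a1) ostar ->
  [set i | eating_at_exhaustion pref e i ostar] = [set a1; a2] ->
  let t1 := start e (pref a1) ostar in
  let t1_plus_t2 := e ostar in
  let O3 := [set j : 'I_m | (t1_plus_t2 < e j) && (e j <= T)] in
  forall j, j \in O3 ->
    (2 <= #|[set i | eating_at_exhaustion pref e i j & (i != a1) && (i != a2)]|)%N.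
Proof.
move=> _ _ _ a12 PS Obar T _ ltT23 _ _ eaters_ostar t1 t12 O3 j.
rewrite inE /t12 => /andP[lt_ostar_j le_jT].
have eating_ostar i : eating_at_exhaustion pref e i ostar = (i \in [set a1; a2]).
  by rewrite -eaters_ostar inE.
have card12 : #|[set a1; a2]| = 2%N by rewrite cards2 a12.
have ostar_late : 1 <= e ostar *+ 2.
  by rewrite -card12; apply: PS_run_supply_le => // i; rewrite eating_ostar.
set S := [set i | _ & _]; rewrite leqNgt ltnS; apply/negP => S_le1.
have supply_j : 1 <= e j *+ #|S| + (e j - e ostar) *+ 2.
  rewrite -card12; apply: PS_run_late_supply_le lt_ostar_j => //.
  - by rewrite disjoint_subset; apply/subsetP => i; rewrite !inE => /and3P[_ /negPf -> /negPf ->].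
  - by move=> i eat_i; rewrite !inE eat_i /= -negb_or orNb.
  - by move=> i; rewrite eating_ostar.
have ej_gt0 := PS_run_exhaustion_gt0 PS j.
have : e j *+ #|S| <= e j.
  by case: #|S| S_le1 => [|[|//]] _; [rewrite mulr0n; apply: ltW | rewrite mulr1n].
lra.
Qed.
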